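(* Let $Z$ be a countable well-partially-ordered set and let $n\in\mathbb{N}$. For every $z\in Z$, $\mathrm{rk}(z)<\omega\cdot n$ if and only if $z\in A_n(Z)$.
   Context: A well partial order (wpo) is a partial order in which every infinite sequence $x_0,x_1,\dots$ has $i<j$ with $x_i\le x_j$. The rank of $z$ in a well-founded poset $Z$ is $\mathrm{rk}(z)=\sup\{\mathrm{rk}(y)+1: y<z\}$ ($\sup\emptyset=0$). An acceleration candidate is a strictly increasing sequence $z_0<z_1<\cdots$; it goes through a set $A$ if some $z_i\in A$, and is below $z$ if $z_i\le z$ for all $i$. Define $A_0(Z)=\emptyset$ and, for an ordinal $\alpha>0$, $A_\alpha(Z)$ as the set of $z\in Z$ such that every acceleration candidate below $z$ goes through $A_\beta(Z)$ for some $\beta<\alpha$. *)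

From Stdlib Require Import Arith.

Set Implicit Arguments.

Section Defs.
Variable Z : Type.
Variable le : Z -> Z -> Prop.

Definition lt (x y : Z) : Prop := le x y /\ x <> y.

Definition is_partial_order : Prop :=
  (forall x, le x x) /\
  (forall x y, le x y -> le y x -> x = y) /\
  (forall x y w, le x y -> le y w -> le x w).

Definition is_wpo : Prop :=
  is_partial_order /\
  forall f : nat -> Z, exists i j, i < j /\ le (f i) (f j).

Definition countable : Prop :=
  exists g : Z -> nat, forall x y, g x = g y -> x = y.

(* Ordinals below omega^2: (a, b) encodes omega*a + b, ordered lexicographically. *)
Definition olt (p q : nat * nat) : Prop :=
  fst p < fst q \/ (fst p = fst q /\ snd p < snd q).

(* rk_le z (a,b)  <->  rk(z) <= omega*a + b, where
   rk(z) = sup { rk(y)+1 : y < z }.  Indeed rk(z) <= beta iff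
   every y < z has rk(y) < beta, i.e. rk(y) <= gamma for some gamma < beta. *)
Inductive rk_le (z : Z) (p : nat * nat) : Prop :=
  | rk_le_intro :
      (forall y, lt y z -> exists q, olt q p /\ rk_le y q) -> rk_le z p.

Definition rank_lt_omega_mul (z : Z) (n : nat) : Prop :=
  exists p : nat * nat, fst p < n /\ rk_le z p.

Definition acc_cand (s : nat -> Z) : Prop := forall i, lt (s i) (s (S i)).
Definition goes_through (s : nat -> Z) (A : Z -> Prop) : Prop := exists i, A (s i).
Definition below (s : nat -> Z) (z : Z) : Prop := forall i, le (s i) z.

(* Given B = union_{beta < alpha} A_beta, the set A_alpha *)
Definition Anext (B : Z -> Prop) (z : Z) : Prop :=
  forall s, acc_cand s -> below s z -> goes_through s B.

(* Aupto k = union_{beta <= k} A_beta *)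
Fixpoint Aupto (k : nat) : Z -> Prop :=
  match k with
  | 0 => fun _ => False
  | S k' => fun z => Aupto k' z \/ Anext (Aupto k') z
  end.

Definition A (n : nat) : Z -> Prop :=
  match n with
  | 0 => fun _ => False
  | S k => Anext (Aupto k)
  end.
End Defs.

(** If [rk z] is at least [ω·(k+1)], take a minimal such [w ≤ z]: its
    predecessors have ranks cofinal in [[ω·k, ω·(k+1))], so they contain an
    infinite sequence of strictly increasing ranks, and by the wqo property a
    subsequence of it is an acceleration candidate below [z] avoiding all
    elements of rank [< ω·k]; hence [z ∉ A_(k+1)].  Conversely, if
    [rk z ≤ ω·k + b], then along any acceleration candidate [s] below [z] the
    ranks of [s b, s (b-1), ...] decrease strictly, so one of them drops below
    [ω·k] within [b+1] steps. *)

From Stdlib Require Import Arith Lia Classical ClassicalEpsilon.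

Set Implicit Arguments.

Lemma dependent_choice_on {X : Type} {P : X -> Prop} {R : X -> X -> Prop} {x0 : X} :
  P x0 -> (forall x, P x -> exists y, P y /\ R x y) ->
  exists f : nat -> X, forall n, P (f n) /\ R (f n) (f (S n)).
Proof.
  intros Px0 Hstep.
  destruct (choice (fun x y => P x -> P y /\ R x y)) as [next Hnext].
  { intro x. destruct (classic (P x)) as [Px | nPx].
    - destruct (Hstep x Px) as [y Hy]. exists y. auto.
    - exists x. contradiction. }
  exists (fun n => Nat.iter n next x0).
  assert (HP : forall n, P (Nat.iter n next x0)).
  { induction n as [| n IH]; [exact Px0 | apply (Hnext _ IH)]. }
  intro n. split; [apply HP | apply (Hnext _ (HP n))].
Qed.

Lemma chain_trans {X : Type} {R : X -> X -> Prop} (f : nat -> X) :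
  (forall x y u, R x y -> R y u -> R x u) -> (forall n, R (f n) (f (S n))) ->
  forall i j, i < j -> R (f i) (f j).
Proof.
  intros Htrans Hstep i j Hij. induction Hij as [| j Hij IH]; [apply Hstep |].
  exact (Htrans _ _ _ IH (Hstep j)).
Qed.

Lemma olt_trans p q r : olt p q -> olt q r -> olt p r.
Proof. destruct p, q, r; unfold olt; simpl; lia. Qed.

Section WellPartialOrder.

Variable Z : Type.
Variable le : Z -> Z -> Prop.
Hypothesis le_po : is_partial_order le.
Hypothesis le_good : forall f : nat -> Z, exists i j, i < j /\ le (f i) (f j).

Notation ltz := (lt le).
Notation rk_le := (rk_le le).
Notation rank_lt_omega_mul := (rank_lt_omega_mul le).

Lemma ltz_le_trans x y u : ltz x y -> le y u -> ltz x u.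
Proof.
  destruct le_po as [_ [le_anti le_trans]]. intros [Hxy Hneq] Hyu. split.
  - exact (le_trans _ _ _ Hxy Hyu).
  - intros <-. apply Hneq. exact (le_anti _ _ Hxy Hyu).
Qed.

Lemma ltz_trans x y u : ltz x y -> ltz y u -> ltz x u.
Proof. intros Hxy [Hyu _]. exact (ltz_le_trans Hxy Hyu). Qed.

Lemma wpo_minimal (P : Z -> Prop) z :
  P z -> exists w, P w /\ forall y, ltz y w -> ~ P y.
Proof.
  intro Pz. apply NNPP. intro Hno_min.
  assert (Hdesc : forall x, P x -> exists y, P y /\ ltz y x).
  { intros x Px. apply NNPP. intro Hno. apply Hno_min. exists x. split; [exact Px |].
    intros y Hyx Py. apply Hno. exists y. auto. }
  destruct (dependent_choice_on Pz Hdesc) as [f Hf].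
  destruct (le_good f) as [i [j [Hij Hle]]].
  assert (Hji : ltz (f j) (f i)).
  { apply (chain_trans (R := fun x y => ltz y x) f); [| apply Hf | exact Hij].
    intros x y u Hyx Huy. exact (ltz_trans Huy Hyx). }
  destruct Hji as [Hji Hneq]. destruct le_po as [_ [le_anti _]].
  exact (Hneq (le_anti _ _ Hji Hle)).
Qed.

Lemma wqo_eventually_extendable (f : nat -> Z) :
  exists N, forall i, N <= i -> exists j, i < j /\ le (f i) (f j).
Proof.
  apply NNPP. intro Hno.
  pose (terminal i := forall j, i < j -> ~ le (f i) (f j)).
  assert (Hterm : forall N, exists i, N <= i /\ terminal i).
  { intro N. apply NNPP. intro Hfin. apply Hno. exists N. intros i Hi.
    apply NNPP. intro Hi'. apply Hfin. exists i. split; [exact Hi |].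
    intros j Hij Hle. apply Hi'. eauto. }
  destruct (Hterm 0) as [i0 [_ Hi0]].
  destruct (dependent_choice_on (R := Peano.lt) Hi0) as [g Hg].
  { intros x _. destruct (Hterm (S x)) as [y [Hy Ty]]. exists y. split; [exact Ty | lia]. }
  destruct (le_good (fun n => f (g n))) as [i [j [Hij Hle]]].
  apply (proj1 (Hg i) (g j)); [| exact Hle].
  apply (chain_trans (R := Peano.lt)); [exact Nat.lt_trans | apply Hg | exact Hij].
Qed.

Lemma wqo_increasing_subsequence (f : nat -> Z) :
  exists phi : nat -> nat,
    (forall i, phi i < phi (S i)) /\ forall i, le (f (phi i)) (f (phi (S i))).
Proof.
  destruct (wqo_eventually_extendable f) as [N HN].
  destruct (dependent_choice_on (P := fun i => N <= i)
              (R := fun i j => i < j /\ le (f i) (f j)) (le_n N)) as [phi Hphi].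
  { intros i Hi. destruct (HN i Hi) as [j [Hij Hle]]. exists j. split; [lia | auto]. }
  exists phi. split; intro i; apply Hphi.
Qed.

Lemma rk_le_weaken z p q : rk_le z p -> olt p q -> rk_le z q.
Proof.
  intros [Hz] Hpq. constructor. intros y Hy.
  destruct (Hz y Hy) as [r [Hrp Hr]]. exists r. split; [exact (olt_trans Hrp Hpq) | exact Hr].
Qed.

Lemma rk_le_mono z a b a' b' :
  rk_le z (a, b) -> a < a' \/ (a = a' /\ b <= b') -> rk_le z (a', b').
Proof.
  intros Hz Hab. destruct (Nat.eq_dec a a') as [<- |]; [destruct (Nat.eq_dec b b') as [<- |] |];
    [exact Hz | |]; apply (rk_le_weaken Hz); unfold olt; simpl; lia.
Qed.

Lemma rank_lt_omega_mul_0 z : ~ rank_lt_omega_mul z 0.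
Proof. intros [p [Hp _]]. lia. Qed.

Lemma rank_lt_omega_mul_rk_le z k b : rank_lt_omega_mul z k -> rk_le z (k, b).
Proof. intros [[a b0] [Ha Hz]]. simpl in Ha. apply (rk_le_mono Hz). lia. Qed.

Lemma rank_lt_omega_mul_S z k : rank_lt_omega_mul z (S k) -> exists b, rk_le z (k, b).
Proof. intros [[a b] [Ha Hz]]. simpl in Ha. exists b. apply (rk_le_mono Hz). lia. Qed.

Lemma not_rank_lt_omega_mul_S z k :
  ~ rank_lt_omega_mul z (S k) -> forall b, exists y, ltz y z /\ ~ rk_le y (k, b).
Proof.
  intros Hz b. apply NNPP. intro Hno. apply Hz. exists (k, S b). split; [simpl; lia |].
  constructor. intros y Hy. exists (k, b). split; [unfold olt; simpl; lia |].
  apply NNPP. intro Hyb. apply Hno. exists y. auto.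
Qed.

Lemma acc_cand_rank_drop s n :
  acc_cand le s -> forall c x, ltz (s c) x -> rk_le x (n, c) ->
  exists j, rank_lt_omega_mul (s j) n.
Proof.
  intro Hs. induction c as [| c IH]; intros x Hsx [Hx];
    destruct (Hx _ Hsx) as [[a b] [Hab Hsc]]; unfold olt in Hab; simpl in Hab.
  - exists 0, (a, b). simpl. split; [lia | exact Hsc].
  - destruct (Nat.lt_ge_cases a n) as [Ha | Ha].
    + exists (S c), (a, b). simpl. auto.
    + apply (IH (s (S c)) (Hs c)). apply (rk_le_mono Hsc). lia.
Qed.

Lemma Anext_of_rank_lt_omega_mul_S k (B : Z -> Prop) z :
  (forall y, rank_lt_omega_mul y k -> B y) ->
  rank_lt_omega_mul z (S k) -> Anext le B z.
Proof.
  intros HB [[a b] [Ha Hz]] s Hs Hbelow. simpl in Ha.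
  destruct (acc_cand_rank_drop (n := k) Hs (c := b) (x := z)) as [j Hj].
  - exact (ltz_le_trans (Hs b) (Hbelow (S b))).
  - apply (rk_le_mono Hz). lia.
  - exists j. exact (HB _ Hj).
Qed.

Definition rank_separated k x y := exists b, rk_le x (k, b) /\ ~ rk_le y (k, b).

Lemma rank_separated_trans k x y u :
  rank_separated k x y -> rank_separated k y u -> rank_separated k x u.
Proof.
  intros [b [Hx Hy]] [b' [Hy' Hu]]. exists b'. split; [| exact Hu].
  apply (rk_le_mono Hx). right. split; [reflexivity |].
  destruct (Nat.le_gt_cases b' b) as [Hle | Hlt]; [| lia].
  exfalso. apply Hy. apply (rk_le_mono Hy'). lia.
Qed.

Lemma rank_separated_neq k x y : rank_separated k x y -> x <> y.
Proof. intros [b [Hx Hy]] <-. exact (Hy Hx). Qed.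

Lemma limit_rank_acc_cand k w :
  ~ rank_lt_omega_mul w (S k) -> (forall y, ltz y w -> rank_lt_omega_mul y (S k)) ->
  exists s, acc_cand le s /\ below le s w /\ forall i, ~ rank_lt_omega_mul (s i) k.
Proof.
  intros Hw Hpred.
  pose (high y := ltz y w /\ ~ rank_lt_omega_mul y k).
  assert (Hhigh : forall b y, ltz y w -> ~ rk_le y (k, b) -> high y).
  { intros b y Hy Hyb. split; [exact Hy |]. intro Hyk.
    exact (Hyb (rank_lt_omega_mul_rk_le b Hyk)). }
  destruct (not_rank_lt_omega_mul_S Hw 0) as [y0 [Hy0 Hy0b]].
  destruct (dependent_choice_on (R := rank_separated k) (Hhigh _ _ Hy0 Hy0b))
    as [f Hf].
  { intros x [Hx _]. destruct (rank_lt_omega_mul_S (Hpred x Hx)) as [b Hxb].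
    destruct (not_rank_lt_omega_mul_S Hw b) as [y [Hy Hyb]].
    exists y. split; [exact (Hhigh _ _ Hy Hyb) | exists b; auto]. }
  destruct (wqo_increasing_subsequence f) as [phi [Hphi_inc Hphi_le]].
  exists (fun i => f (phi i)). split; [| split]; intro i.
  - split; [apply Hphi_le |].
    apply (rank_separated_neq (k := k)), (chain_trans (R := rank_separated k)).
    + exact (@rank_separated_trans k).
    + apply Hf.
    + apply Hphi_inc.
  - apply (Hf (phi i)).
  - apply (Hf (phi i)).
Qed.

Lemma rank_lt_omega_mul_S_of_Anext k (B : Z -> Prop) z :
  (forall y, B y -> rank_lt_omega_mul y k) ->
  Anext le B z -> rank_lt_omega_mul z (S k).
Proof.
  intros HB Hz. apply NNPP. intro Hnz.
  destruct le_po as [le_refl [_ le_trans]].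
  destruct (wpo_minimal (fun w => le w z /\ ~ rank_lt_omega_mul w (S k)))
    with (z := z) as [w [[Hwz Hw] Hmin]]; [auto |].
  destruct (limit_rank_acc_cand Hw) as [s [Hs [Hbelow Hhigh]]].
  { intros y Hy. apply NNPP. intro Hny. apply (Hmin y Hy).
    split; [exact (le_trans _ _ _ (proj1 Hy) Hwz) | exact Hny]. }
  destruct (Hz s Hs) as [i Hi].
  - intro i. exact (le_trans _ _ _ (Hbelow i) Hwz).
  - exact (Hhigh i (HB _ Hi)).
Qed.

Lemma rank_lt_omega_mul_iff_Aupto n z : rank_lt_omega_mul z n <-> Aupto le n z.
Proof.
  revert z. induction n as [| n IH]; intro z; simpl.
  - split; [apply rank_lt_omega_mul_0 | tauto].
  - split.
    + intro Hz. right. apply (Anext_of_rank_lt_omega_mul_S (k := n)); [apply IH | exact Hz].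
    + intros [Hz | Hz].
      * destruct (proj2 (IH z) Hz) as [p [Hp Hr]]. exists p. split; [lia | exact Hr].
      * apply (rank_lt_omega_mul_S_of_Anext (B := Aupto le n)); [apply IH | exact Hz].
Qed.

End WellPartialOrder.

Theorem lemma15 (Z : Type) (le : Z -> Z -> Prop)
  (Hwpo : is_wpo le) (Hcount : countable Z) (n : nat) :
  forall z : Z, rank_lt_omega_mul le z n <-> A le n z.
Proof.
  destruct Hwpo as [Hpo Hgood]. intro z. destruct n as [| n]; simpl.
  - split; [apply rank_lt_omega_mul_0 | tauto].
  - pose proof (rank_lt_omega_mul_iff_Aupto Hpo Hgood n) as IH. split.
    + apply (Anext_of_rank_lt_omega_mul_S Hpo). apply IH.
    + apply (rank_lt_omega_mul_S_of_Anext Hpo Hgood). apply IH.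
Qed.
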